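(* Let $(\bar F,\bar\Delta,\bar\nu)$ be a probability preserving dynamical system with transfer operator $\mathcal L$, let $\bar\phi:\bar\Delta\to\mathbb R$ be measurable and set $\mathcal L_{is}h:=\mathcal L(e^{is\bar\phi}h)$ for $s\in\mathbb R$. Let $\mathcal B_1\hookrightarrow\mathcal B_2\hookrightarrow L^1(\bar\nu)$ be complex Banach spaces with $\mathbf 1_{\bar\Delta}\in\mathcal B_1$ on which the operators $\mathcal L_{is}^n$ act, and assume there exist constants $\alpha_1\in(0,1]$, $K,C,\alpha>0$ and an integer $n_0$ such that $$\forall n\ge n_0,\ \forall |s|>K:\qquad \|\mathcal L^n_{is}\|_{\mathcal B_1\to\mathcal B_2}\le C|s|^\alpha e^{-Cn^{\alpha_1}}.$$ Then: (i) there exist $K'>0$, $C'>0$, $\alpha'\ge0$, $\alpha_1'\in(0,1]$, $\hat\delta>0$ and $n_1$ such that for every $|s|>K'$ and every $n\ge n_1$, $\|\mathcal L^n_{is}\|_{\mathcal B_1\to\mathcal B_2}\le C'|s|^{\alpha'}e^{-n^{\alpha_1'}\hat\delta|s|^{-\alpha'}}$; (ii) for every $r\ge0$, every $d_1\in[0,1]$ and every $B>0$ there exists $K''>0$ such that $\displaystyle\int_{K''<|s|<Bn^{(r-1)/2}}\frac{\|\mathcal L^n_{is}\|_{\mathcal B_1\to\mathcal B_2}}{|s|^{d_1}}\,ds=o(n^{-r/2})$ as $n\to\infty$.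
   Context: The transfer operator $\mathcal L$ of $(\bar F,\bar\Delta,\bar\nu)$ is the operator on $L^1(\bar\nu)$ characterized by $\mathbb E_{\bar\nu}(g\cdot h\circ\bar F)=\mathbb E_{\bar\nu}(h\,\mathcal L g)$ for all $g\in L^1$, $h\in L^\infty$. $\hookrightarrow$ denotes continuous embedding. $\|\cdot\|_{\mathcal B_1\to\mathcal B_2}$ is the operator norm from $\mathcal B_1$ to $\mathcal B_2$. *)

From HB Require Import structures.
From mathcomp Require Import all_boot all_order all_algebra.
From mathcomp Require Import all_classical all_reals all_analysis.
From mathcomp Require Import complex.
Set Implicit Arguments.
Unset Strict Implicit.
Unset Printing Implicit Defensive.
Import Order.TTheory GRing.Theory Num.Theory.
Local Open Scope classical_set_scope.
Local Open Scope ring_scope.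

Section Defs.
Context {d : measure_display} {T : measurableType d} {R : realType}.
Implicit Types (mu : {measure set T -> \bar R}) (f g h : T -> R[i]).

Definition cRe f : T -> R := fun x => complex.Re (f x).
Definition cIm f : T -> R := fun x => complex.Im (f x).

Definition cmeasurable f :=
  measurable_fun setT (cRe f) /\ measurable_fun setT (cIm f).

Definition cintegrable mu f :=
  mu.-integrable setT (fun x => (cRe f x)%:E) /\
  mu.-integrable setT (fun x => (cIm f x)%:E).

Definition cexpect mu f : R[i] :=
  (Rintegral mu setT (cRe f) +i* Rintegral mu setT (cIm f))%C.

Definition cL1norm mu f : R := Rintegral mu setT (fun x => Normc.normc (f x)).

Definition cLinfty f := cmeasurable f /\ exists M : R, forall x, Normc.normc (f x) <= M.

Definition measure_preserving mu (F : T -> T) :=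
  measurable_fun setT F /\
  forall A, measurable A -> mu (F @^-1` A) = mu A.

(** L is the transfer operator of (F, T, mu):
    for g in L^1, L g in L^1 and E(g * h o F) = E(h * L g) for all h in L^infty.
    (L is a map on representatives; it is determined only mu-a.e.) *)
Definition is_transfer_operator mu (F : T -> T)
    (L : (T -> R[i]) -> (T -> R[i])) :=
  forall g, cintegrable mu g ->
    cintegrable mu (L g) /\
    forall h, cLinfty h ->
      cexpect mu (fun x => g x * h (F x)) = cexpect mu (fun x => h x * L g x).

Definition expi (t : R) : R[i] := (cos t +i* sin t)%C.

Definition Lis (L : (T -> R[i]) -> (T -> R[i])) (phi : T -> R) (s : R)
    (h : T -> R[i]) : T -> R[i] :=
  L (fun x => expi (s * phi x) * h x).

Definition vnorm {V : normedModType R[i]} (v : V) : R := complex.Re `|v|.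

(** (V, iota) is a complex Banach space continuously embedded in L^1(mu):
    iota : V -> (T -> C) picks representatives, is linear mod a.e.,
    injective mod a.e., lands in L^1 and is bounded. *)
Definition embedded_in_L1 mu {V : completeNormedModType R[i]}
    (iota : V -> T -> R[i]) :=
  [/\ forall v, cintegrable mu (iota v),
      forall (a : R[i]) (v w : V),
        ae_eq mu setT (iota (a *: v + w)) (fun x => a * iota v x + iota w x),
      forall v, ae_eq mu setT (iota v) (fun=> 0) -> v = 0 &
      exists c : R, forall v, cL1norm mu (iota v) <= c * vnorm v].

Definition cont_embedding mu {V1 V2 : completeNormedModType R[i]}
    (iota1 : V1 -> T -> R[i]) (iota2 : V2 -> T -> R[i]) :=
  exists (j : V1 -> V2) (c : R),
    (forall v, ae_eq mu setT (iota2 (j v)) (iota1 v)) /\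
    (forall v, vnorm (j v) <= c * vnorm v).

Definition acts_on mu {V : completeNormedModType R[i]}
    (iota : V -> T -> R[i]) (Op : (T -> R[i]) -> (T -> R[i])) :=
  forall v : V, exists w : V, ae_eq mu setT (iota w) (Op (iota v)).

Definition opnorm mu {V1 V2 : completeNormedModType R[i]}
    (iota1 : V1 -> T -> R[i]) (iota2 : V2 -> T -> R[i])
    (Op : (T -> R[i]) -> (T -> R[i])) : \bar R :=
  ereal_sup [set (vnorm w)%:E | w in
    [set w : V2 | exists v : V1,
       vnorm v <= 1 /\ ae_eq mu setT (iota2 w) (Op (iota1 v))]].

End Defs.

From HB Require Import structures.
From mathcomp Require Import all_boot all_order all_algebra.
From mathcomp Require Import all_classical all_reals all_analysis.
From mathcomp Require Import complex ring.
Import Order.TTheory GRing.Theory Num.Theory.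
Local Open Scope classical_set_scope.
Local Open Scope ring_scope.

(* Unlike [ge0_le_integral], neither measurability nor a sign is required of
   [f]: [f^+] is compared with [g] through the simple functions below it. *)
Lemma le_integral_ge0_majorant d (T : measurableType d) (R : realType)
  (mu : {measure set T -> \bar R}) (f g : T -> \bar R) :
  (forall x, (0 <= g x)%E) -> (forall x, (f x <= g x)%E) ->
  (\int[mu]_x f x <= \int[mu]_x g x)%E.
Proof.
move=> g_ge0 fg; rewrite (integralE _ _ f).
apply: (@le_trans _ _ (\int[mu]_x f^\+ x)%E).
  by rewrite geeDl// oppe_le0 integral_ge0// => x _; exact: funeneg_ge0.
rewrite !ge0_integralE => [||x _]; [|by []|exact: funepos_ge0].
apply: ereal_sup_le => _ [h /= hf <-]; exists h => //= x.
apply: (le_trans (hf x)); rewrite /patch /=; case: ifP => // _.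
by rewrite funeposE ge_max fg g_ge0.
Qed.

Lemma integral_annulus_le {R : realType} (f : R -> \bar R) {K M c : R} :
  0 <= c -> 0 < M -> (forall s, K < `|s| < M -> (f s <= c%:E)%E) ->
  (\int[lebesgue_measure]_(s in [set s : R | (K < `|s| < M)%R]) f s
     <= (c * (M *+ 2))%:E)%E.
Proof.
move=> c_ge0 M_gt0 f_le_c.
apply: (@le_trans _ _
  (\int[lebesgue_measure]_(s in [set` `]- M, M[%R]) (cst c%:E s))%E).
  rewrite integral_mkcond [leRHS]integral_mkcond.
  apply: le_integral_ge0_majorant => s; rewrite /patch.
    by case: ifP; rewrite ?lee_fin.
  case: ifPn => [|_]; last by case: ifP; rewrite ?lee_fin.
  rewrite inE /= => /andP[Ks sM].
  by rewrite ifT ?f_le_c ?Ks// inE /= in_itv /= -ltr_norml.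
rewrite integral_cst//= lebesgue_measure_itv /= lte_fin gtrN//.
by rewrite opprK -EFinD -EFinM lee_fin mulr2n.
Qed.

Lemma invr_powR_le1 {R : realType} {x q : R} : 1 <= x -> 0 <= q ->
  (x `^ q)^-1 <= 1.
Proof.
move=> x_ge1 q_ge0; rewrite invf_le1 ?powR_gt0 ?(lt_le_trans ltr01)//.
by rewrite -(powRr0 x) ler_powR.
Qed.

Lemma expRN_le_fact_div {R : realType} (m : nat) {x : R} : 0 < x ->
  expR (- x) <= m.+1`!%:R / x ^+ m.+1.
Proof.
move=> x_gt0; rewrite expRN -invf_div.
rewrite lef_pV2 ?posrE ?expR_gt0 ?divr_gt0 ?exprn_gt0 ?ltr0n ?fact_gt0//.
by apply: le_trans (expR_ge1Dxn m (ltW x_gt0)); rewrite lerDr.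
Qed.

Lemma near_powR_ge {R : realType} {a : R} (Q : R) : 0 < a ->
  \forall n \near \oo, Q <= n%:R `^ a.
Proof.
move=> a_gt0; near=> n.
have N_le_n : ((Num.truncn (`|Q| `^ a^-1)).+1 <= n)%N.
  by near: n; exact: nbhs_infty_ge.
apply: (le_trans (ler_norm Q)).
have -> : `|Q| = (`|Q| `^ a^-1) `^ a.
  by rewrite -powRrM mulVf ?lt0r_neq0 ?powRr1.
apply: ge0_ler_powR; rewrite ?nnegrE ?powR_ge0 ?ler0n ?(ltW a_gt0)//.
by apply/ltW/(lt_le_trans (truncnS_gt _)); rewrite ler_nat.
Unshelve. all: by end_near.
Qed.

Lemma near_powR_mul_expR_le {R : realType} (A p : R) {C a eps : R} :
  0 < C -> 0 < a -> 0 < eps ->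
  \forall n \near \oo, A * n%:R `^ p * expR (- C * n%:R `^ a) <= eps.
Proof.
move=> C_gt0 a_gt0 eps_gt0.
have [A_le0|A_gt0] := lerP A 0.
  near=> n; apply/(le_trans _ (ltW eps_gt0))/mulr_le0_ge0 => //.
  by rewrite mulr_le0_ge0 ?powR_ge0.
pose m := (Num.truncn (p / a)).+1.
have p_le : p <= a * m%:R.
  by rewrite -ler_pdivrMl// mulrC ltW// truncnS_gt.
pose f : R := m.+1`!%:R.
pose Q := A * f / (eps * C ^+ m.+1).
near=> n.
have n_ge1 : 1 <= n%:R :> R by rewrite ler1n; near: n; exact: nbhs_infty_ge.
have y_geQ : Q <= n%:R `^ a by near: n; exact: near_powR_ge.
set y := n%:R `^ a in y_geQ *.
have y_gt0 : 0 < y by rewrite powR_gt0// (lt_le_trans ltr01).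
have np_le : n%:R `^ p <= y ^+ m.
  by rewrite -powR_mulrn ?powR_ge0// -powRrM ler_powR.
have := expRN_le_fact_div m (mulr_gt0 C_gt0 y_gt0); rewrite -mulNr => E_le.
apply: (@le_trans _ _ (A * (y ^+ m * (f / (C * y) ^+ m.+1)))).
  rewrite -mulrA; apply: ler_wpM2l; first exact: ltW.
  exact: ler_pM (powR_ge0 _ _) (expR_ge0 _) np_le E_le.
have -> : A * (y ^+ m * (f / (C * y) ^+ m.+1)) = Q * eps / y.
  rewrite /Q exprMn [y ^+ m.+1]exprSr; field.
  by rewrite !expf_neq0 ?lt0r_neq0.
by rewrite ler_pdivrMr// mulrC ler_wpM2l// ltW.
Unshelve. all: by end_near.
Qed.

Section stretched_exponential_decay.
Context {R : realType} {N : R -> nat -> \bar R} {a1 K C al : R} {n0 : nat}.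
Hypotheses (a1_gt0 : 0 < a1) (K_ge0 : 0 <= K) (C_gt0 : 0 < C).
Hypothesis al_ge0 : 0 <= al.
Hypothesis N_decay : forall n, (n0 <= n)%N -> forall s, K < `|s| ->
  (N s n <= (C * `|s| `^ al * expR (- C * n%:R `^ a1))%:E)%E.

Lemma stretched_decay_bound s : K + 1 < `|s| -> forall n, (n0 <= n)%N ->
  (N s n <= (C * `|s| `^ al * expR (- (n%:R `^ a1 * C * `|s| `^ (- al))))%:E)%E.
Proof.
move=> Ks n n0_le_n.
have s_ge1 : 1 <= `|s| by apply/ltW/(le_lt_trans _ Ks); rewrite lerDr.
have K_lt_s : K < `|s| by apply: lt_trans Ks; rewrite ltrDl.
apply: (le_trans (N_decay n n0_le_n s K_lt_s)).
rewrite lee_fin; apply: ler_wpM2l; first by rewrite mulr_ge0 ?powR_ge0// ltW.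
rewrite ler_expR mulNr lerN2 [C * _]mulrC; apply: ler_piMr.
  by rewrite mulr_ge0 ?powR_ge0// ltW.
by rewrite powRN invr_powR_le1.
Qed.

Lemma decay_integral_annulus_small (r d1 B eps : R) :
  0 <= d1 -> 0 < B -> 0 < eps ->
  \forall n \near \oo,
    (\int[lebesgue_measure]_(s in
        [set s : R | (K + 1 < `|s| < B * n%:R `^ ((r - 1) / 2))%R])
       (N s n * ((`|s| `^ d1)^-1)%:E) <= (eps * n%:R `^ (- (r / 2)))%:E)%E.
Proof.
move=> d1_ge0 B_gt0 eps_gt0.
set p := (r - 1) / 2.
have decay_small := near_powR_mul_expR_le (2 * C * B `^ al * B)
  (p * al + p + r / 2) C_gt0 a1_gt0 eps_gt0.
near=> n.
have n0_le_n : (n0 <= n)%N by near: n; exact: nbhs_infty_ge.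
have n_gt0 : 0 < n%:R :> R by rewrite ltr0n; near: n; exact: nbhs_infty_ge.
have small : 2 * C * B `^ al * B * n%:R `^ (p * al + p + r / 2) *
  expR (- C * n%:R `^ a1) <= eps by near: n.
set M := B * n%:R `^ p.
set E := expR (- C * n%:R `^ a1) in small *.
have M_gt0 : 0 < M by rewrite mulr_gt0 ?powR_gt0.
apply: (le_trans (integral_annulus_le (c := C * M `^ al * E) _ _ M_gt0 _)).
- by rewrite mulr_ge0 ?expR_ge0// mulr_ge0 ?powR_ge0// ltW.
- move=> s /andP[Ks sM].
  have s_ge1 : 1 <= `|s| by apply/ltW/(le_lt_trans _ Ks); rewrite lerDr.
  have K_lt_s : K < `|s| by apply: lt_trans Ks; rewrite ltrDl.
  apply: (le_trans (lee_wpmul2r _ (N_decay n n0_le_n s K_lt_s))).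
    by rewrite lee_fin invr_ge0 powR_ge0.
  rewrite -EFinM lee_fin.
  apply: (le_trans (ler_wpM2l _ (invr_powR_le1 s_ge1 d1_ge0))).
    by rewrite mulr_ge0 ?expR_ge0// mulr_ge0 ?powR_ge0// ltW.
  rewrite mulr1; apply: ler_wpM2r; first exact: expR_ge0.
  apply: ler_wpM2l; first exact: ltW.
  by apply: ge0_ler_powR; rewrite ?nnegrE// ?ltW// (le_trans ler01).
- rewrite lee_fin powRN ler_pdivlMr ?powR_gt0//; apply: le_trans small.
  rewrite le_eqVlt; apply/orP; left; apply/eqP.
  have n_neq0 : n%:R != 0 :> R by rewrite lt0r_neq0.
  rewrite !powRD ?n_neq0 ?implybT// /M powRM ?powR_ge0 ?ltW// -powRrM.
  by ring.
Unshelve. all: by end_near.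
Qed.
End stretched_exponential_decay.

Theorem lemma4p7 (d : measure_display) (T : measurableType d) (R : realType)
  (nu : probability T R) (F : T -> T) (L : (T -> R[i]) -> (T -> R[i]))
  (phi : T -> R)
  (V1 V2 : completeNormedModType R[i])
  (iota1 : V1 -> T -> R[i]) (iota2 : V2 -> T -> R[i]) :
  measure_preserving nu F ->
  is_transfer_operator nu F L ->
  measurable_fun setT phi ->
  embedded_in_L1 nu iota1 ->
  embedded_in_L1 nu iota2 ->
  cont_embedding nu iota1 iota2 ->
  (exists v1 : V1, ae_eq nu setT (iota1 v1) (fun=> 1)) ->
  (forall s : R, acts_on nu iota1 (Lis L phi s)) ->
  (forall s : R, acts_on nu iota2 (Lis L phi s)) ->
  (exists (alpha1 K C alpha : R) (n0 : nat),
     [/\ 0 < alpha1 <= 1, 0 < K, 0 < C, 0 < alpha &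
      forall n : nat, (n0 <= n)%N -> forall s : R, K < `|s| ->
        (opnorm nu iota1 iota2 (iter n (Lis L phi s)) <=
         (C * `|s| `^ alpha * expR (- C * n%:R `^ alpha1))%:E)%E]) ->
  (* (i) *)
  (exists (K' C' alpha' alpha1' dhat : R) (n1 : nat),
     [/\ 0 < K', 0 < C', 0 <= alpha', 0 < alpha1' <= 1 /\ 0 < dhat &
      forall s : R, K' < `|s| -> forall n : nat, (n1 <= n)%N ->
        (opnorm nu iota1 iota2 (iter n (Lis L phi s)) <=
         (C' * `|s| `^ alpha' *
          expR (- (n%:R `^ alpha1' * dhat * `|s| `^ (- alpha'))))%:E)%E])
  /\
  (* (ii) *)
  (forall (r d1 B : R), 0 <= r -> 0 <= d1 <= 1 -> 0 < B ->
     exists K'' : R, 0 < K'' /\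
       forall eps : R, 0 < eps ->
         \forall n \near \oo,
           (\int[@lebesgue_measure R]_(s in
               [set s : R | (K'' < `|s| < B * n%:R `^ ((r - 1) / 2))%R])
              (opnorm nu iota1 iota2 (iter n (Lis L phi s)) *
               ((`|s| `^ d1)^-1)%R%:E)
            <= (eps * n%:R `^ (- (r / 2)))%R%:E)%E).
Proof.
move=> _ _ _ _ _ _ _ _ _
  [a1 [K [C [al [n0 [/andP[a1_gt0 a1_le1] K_gt0 C_gt0 al_gt0 decay]]]]]].
have K_ge0 := ltW K_gt0; have al_ge0 := ltW al_gt0.
have K1_gt0 : 0 < K + 1 by rewrite addr_gt0.
split.
  exists (K + 1), C, al, a1, C, n0; split=> //; first by rewrite a1_gt0.
  exact: stretched_decay_bound K_ge0 C_gt0 al_ge0 decay.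
move=> r d1 B _ /andP[d1_ge0 _] B_gt0; exists (K + 1); split=> // eps eps_gt0.
exact: decay_integral_annulus_small a1_gt0 K_ge0 C_gt0 al_ge0 decay
  r d1 B eps d1_ge0 B_gt0 eps_gt0.
Qed.
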